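(* Let $T$ be a non-degenerate T-graph, $F$ a spanning forest of $T$, and $F^\dagger$ its dual forest equipped with an orientation in which each connected component is oriented towards a chosen end. Then $M(F^\dagger)$ is a perfect matching of the hexagonal lattice $\mathcal H$.
   Context: Setup. $\mathcal H$ is the hexagonal lattice with black/white bipartition, $\mathcal H^\dagger$ its dual triangular lattice. A T-graph $T=\psi(\mathcal H^\dagger)\subset\mathbb C$ (built from a triangle $\Delta$ and a unit complex number $\lambda$) is such that each black vertex $b$ of $\mathcal H$ corresponds to a segment $\psi(b)$ and each white vertex $w$ to a triangular face $\psi(w)$ of $T$; if an edge of $T$ lies on $\psi(b)$ and on the boundary of $\psi(w)$ then $b$ and $w$ are adjacent in $\mathcal H$. Non-degenerate: every vertex of $T$ lies in exactly three segments, being an endpoint of two and in the interior of exactly one, and no face is degenerate; each segment contains exactly one vertex of $T$ in its interior. $T$ is a directed graph: from each vertex $v$ there are two outgoing edges, towards the two endpoints of the segment containing $v$ in its interior. A spanning forest $F$ of $T$ is a set of directed edges such that every vertex has exactly one outgoing edge in $F$ and $F$ contains no cycle even ignoring orientation. The dual $F^\dagger$ is the graph whose vertices are the faces of $T$, with an edge between two faces across each edge of $T$ not in $F$; it is a spanning forest with no finite component; each component is oriented towards a chosen end. Definition of $M(F^\dagger)$: for each white $w$, the unique outgoing edge of $F^\dagger$ from $\psi(w)$ crosses an edge of $T$ lying on a segment $\psi(b)$ with $b$ adjacent to $w$; $w$ is matched to this $b$. *)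

From Stdlib Require Import Reals ZArith List Relations.
Import ListNotations.
Open Scope R_scope.

Definition pt := (R * R)%type.

Definition conv3 (a b c z : pt) : Prop :=
  exists t1 t2 t3 : R, 0 <= t1 /\ 0 <= t2 /\ 0 <= t3 /\ t1 + t2 + t3 = 1 /\
    fst z = t1 * fst a + t2 * fst b + t3 * fst c /\
    snd z = t1 * snd a + t2 * snd b + t3 * snd c.

Definition oconv3 (a b c z : pt) : Prop :=
  exists t1 t2 t3 : R, 0 < t1 /\ 0 < t2 /\ 0 < t3 /\ t1 + t2 + t3 = 1 /\
    fst z = t1 * fst a + t2 * fst b + t3 * fst c /\
    snd z = t1 * snd a + t2 * snd b + t3 * snd c.

Definition collinear (a b c : pt) : Prop :=
  (fst b - fst a) * (snd c - snd a) - (snd b - snd a) * (fst c - fst a) = 0.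

Definition strictly_between (x y z : pt) : Prop :=
  x <> y /\ exists t : R, 0 < t < 1 /\
    fst z = (1 - t) * fst x + t * fst y /\ snd z = (1 - t) * snd x + t * snd y.

Definition closed_seg (x y z : pt) : Prop :=
  exists t : R, 0 <= t <= 1 /\
    fst z = (1 - t) * fst x + t * fst y /\ snd z = (1 - t) * snd x + t * snd y.

Definition extreme (X : pt -> Prop) (z : pt) : Prop :=
  X z /\ ~ (exists x y, X x /\ X y /\ strictly_between x y z).
Definition rel_interior (X : pt -> Prop) (z : pt) : Prop :=
  X z /\ ~ extreme X z.

(* ---------- Hexagonal lattice H and its dual triangular lattice ----------
   Faces of H (= vertices of H^dagger) are indexed by Z x Z, the triangular
   lattice with steps (1,0), (0,1), (-1,1).  A white vertex w = (x,y) of H is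
   the upward triangle {(x,y),(x+1,y),(x,y+1)}; a black vertex b = (x,y) is
   the downward triangle {(x+1,y),(x,y+1),(x+1,y+1)}.  Adjacency in H =
   sharing an edge of H^dagger. *)
Definition Face  := (Z * Z)%type.
Definition White := (Z * Z)%type.
Definition Black := (Z * Z)%type.

Definition adjH (w : White) (b : Black) : Prop :=
  b = w \/ b = (fst w, (snd w - 1)%Z) \/ b = ((fst w - 1)%Z, snd w).

Definition Seg (psi : Face -> pt) (b : Black) : pt -> Prop :=
  conv3 (psi ((fst b + 1)%Z, snd b)) (psi (fst b, (snd b + 1)%Z))
        (psi ((fst b + 1)%Z, (snd b + 1)%Z)).

Definition Tri (psi : Face -> pt) (w : White) : pt -> Prop :=
  conv3 (psi w) (psi ((fst w + 1)%Z, snd w)) (psi (fst w, (snd w + 1)%Z)).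
Definition TriInt (psi : Face -> pt) (w : White) : pt -> Prop :=
  oconv3 (psi w) (psi ((fst w + 1)%Z, snd w)) (psi (fst w, (snd w + 1)%Z)).
Definition TriBdry (psi : Face -> pt) (w : White) (z : pt) : Prop :=
  Tri psi w z /\ ~ TriInt psi w z.

(* T-graph: black vertices go to segments, and the faces of the planar
   graph T (= union of the segments) are exactly the triangles psi(w). *)
Definition is_Tgraph (psi : Face -> pt) : Prop :=
  (forall b : Black,
      collinear (psi ((fst b + 1)%Z, snd b)) (psi (fst b, (snd b + 1)%Z))
                (psi ((fst b + 1)%Z, (snd b + 1)%Z))) /\
  (forall (w w' : White) z, TriInt psi w z -> TriInt psi w' z -> w = w') /\
  (forall (w : White) (b : Black) z, TriInt psi w z -> ~ Seg psi b z) /\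
  (forall z : pt, (forall b : Black, ~ Seg psi b z) ->
      exists w : White, TriInt psi w z).

Definition nondegenerate (psi : Face -> pt) : Prop :=
  (forall f : Face, exists b1 b2 b3 : Black,
      b1 <> b2 /\ b1 <> b3 /\ b2 <> b3 /\
      (forall b, Seg psi b (psi f) <-> (b = b1 \/ b = b2 \/ b = b3)) /\
      extreme (Seg psi b1) (psi f) /\ extreme (Seg psi b2) (psi f) /\
      rel_interior (Seg psi b3) (psi f)) /\
  (forall w : White,
      ~ collinear (psi w) (psi ((fst w + 1)%Z, snd w))
                  (psi (fst w, (snd w + 1)%Z))) /\
  (forall b : Black, exists! f : Face, rel_interior (Seg psi b) (psi f)).

Definition Tedge (psi : Face -> pt) (v v' : Face) : Prop :=
  exists b : Black, rel_interior (Seg psi b) (psi v) /\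
                    extreme (Seg psi b) (psi v').

Fixpoint chain {A : Type} (U : A -> A -> Prop) (l : list A) : Prop :=
  match l with
  | a :: ((b :: _) as t) => U a b /\ chain U t
  | _ => True
  end.

Definition no_cycle (F : Face -> Face -> Prop) : Prop :=
  ~ (exists a b, a <> b /\ F a b /\ F b a) /\
  ~ (exists l : list Face, (3 <= length l)%nat /\ NoDup l /\
       chain (fun a b => F a b \/ F b a) (l ++ firstn 1 l)).

Definition spanning_forest (psi : Face -> pt) (F : Face -> Face -> Prop) : Prop :=
  (forall v v', F v v' -> Tedge psi v v') /\
  (forall v, exists! v', F v v') /\
  no_cycle F.

(* Dual graph F^dagger: edge between faces psi(w), psi(w') across the
   edge (v,v') of T not in F (the edge lies on the boundary of both). *)
Definition DualEdge (psi : Face -> pt) (F : Face -> Face -> Prop)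
    (v v' : Face) (w w' : White) : Prop :=
  Tedge psi v v' /\ ~ F v v' /\ w <> w' /\
  (forall z, closed_seg (psi v) (psi v') z -> TriBdry psi w z /\ TriBdry psi w' z).

Definition dual_connected (psi : Face -> pt) (F : Face -> Face -> Prop) :
    White -> White -> Prop :=
  clos_refl_trans White (fun u u' => exists v v', DualEdge psi F v v' u u').

(* An orientation of F^dagger, given by o w = ((crossed edge of T), head);
   every dual edge is oriented one way, every vertex has exactly one
   outgoing edge, the outgoing paths are rays, and in each component all
   rays are eventually equal, i.e. the component is oriented towards one end. *)
Definition step (o : White -> (Face * Face) * White) (w : White) : White :=
  snd (o w).

Definition oriented_towards_ends (psi : Face -> pt) (F : Face -> Face -> Prop)
    (o : White -> (Face * Face) * White) : Prop :=
  (forall w, DualEdge psi F (fst (fst (o w))) (snd (fst (o w))) w (snd (o w))) /\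
  (forall v v' w w', DualEdge psi F v v' w w' ->
      (o w = ((v, v'), w') \/ o w' = ((v, v'), w)) /\
      ~ (o w = ((v, v'), w') /\ o w' = ((v, v'), w))) /\
  (forall w (n m : nat), Nat.iter n (step o) w = Nat.iter m (step o) w -> n = m) /\
  (forall w w', dual_connected psi F w w' ->
      exists n m : nat, forall k : nat,
        Nat.iter (n + k) (step o) w = Nat.iter (m + k) (step o) w').

(* M(F^dagger): w is matched to b when the outgoing edge of w crosses an
   edge of T lying on psi(b), with b adjacent to w. *)
Definition matchedM (psi : Face -> pt) (o : White -> (Face * Face) * White)
    (w : White) (b : Black) : Prop :=
  adjH w b /\
  (forall z, closed_seg (psi (fst (fst (o w)))) (psi (snd (fst (o w)))) z ->
             Seg psi b z).

Definition perfect_matching (M : White -> Black -> Prop) : Prop :=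
  (forall w b, M w b -> adjH w b) /\
  (forall w : White, exists! b : Black, M w b) /\
  (forall b : Black, exists! w : White, M w b).

From Stdlib Require Import Reals ZArith List Relations Lra Lia Classical.
Open Scope R_scope.

(* The outgoing dual edge of a white face psi(w) crosses an edge of T on one side of the
   triangle psi(w); that side lies on psi(b) for exactly one black neighbour b, since two
   distinct faces of the lattice are corners of at most one black vertex.  Conversely the
   segment psi(b) contains a unique vertex psi(D) in its interior; the F-edge of D goes to
   one endpoint t, so the edge from D to the other endpoint Q is not in F.  It is crossed by
   a dual edge between the two whites adjacent to b along [D, Q] and [t, Q], and the tail
   of this dual edge is matched to b.  Any white matched to b crosses this same edge of T,
   and an orientation with one outgoing edge per vertex and no cycles leaves only one white
   whose outgoing edge crosses it. *)

Lemma barycentric_unique (a b c : pt) t1 t2 t3 s1 s2 s3 :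
  ~ collinear a b c -> t1 + t2 + t3 = 1 -> s1 + s2 + s3 = 1 ->
  t1 * fst a + t2 * fst b + t3 * fst c = s1 * fst a + s2 * fst b + s3 * fst c ->
  t1 * snd a + t2 * snd b + t3 * snd c = s1 * snd a + s2 * snd b + s3 * snd c ->
  t1 = s1 /\ t2 = s2 /\ t3 = s3.
Proof.
  destruct a as [ax ay], b as [bx by_], c as [cx cy]; unfold collinear; simpl.
  intros Hncol Ht Hs Ex Ey.
  set (det := (bx - ax) * (cy - ay) - (by_ - ay) * (cx - ax)) in Hncol.
  assert (Ht3 : t3 = 1 - t1 - t2) by lra; assert (Hs3 : s3 = 1 - s1 - s2) by lra.
  subst t3 s3.
  (* With u_i = t_i - s_i we have u1 (a - c) + u2 (b - c) = 0; cross with b - c and a - c. *)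
  assert (Hx : (t1 - s1) * (ax - cx) + (t2 - s2) * (bx - cx) = 0) by lra.
  assert (Hy : (t1 - s1) * (ay - cy) + (t2 - s2) * (by_ - cy) = 0) by lra.
  assert (H1 : (t1 - s1) * det = 0).
  { replace ((t1 - s1) * det) with
      ((by_ - cy) * ((t1 - s1) * (ax - cx) + (t2 - s2) * (bx - cx))
       - (bx - cx) * ((t1 - s1) * (ay - cy) + (t2 - s2) * (by_ - cy))) by (unfold det; ring).
    rewrite Hx, Hy; ring. }
  assert (H2 : (t2 - s2) * det = 0).
  { replace ((t2 - s2) * det) with
      ((ax - cx) * ((t1 - s1) * (ay - cy) + (t2 - s2) * (by_ - cy))
       - (ay - cy) * ((t1 - s1) * (ax - cx) + (t2 - s2) * (bx - cx))) by (unfold det; ring).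
    rewrite Hx, Hy; ring. }
  apply Rmult_integral in H1 as [H1 | H1]; [| contradiction].
  apply Rmult_integral in H2 as [H2 | H2]; [| contradiction].
  lra.
Qed.

Lemma conv3_swap12 a b c z : conv3 a b c z -> conv3 b a c z.
Proof. intros (t1 & t2 & t3 & ?). exists t2, t1, t3; lra. Qed.

Lemma conv3_swap23 a b c z : conv3 a b c z -> conv3 a c b z.
Proof. intros (t1 & t2 & t3 & ?). exists t1, t3, t2; lra. Qed.

Lemma oconv3_swap12 a b c z : oconv3 a b c z -> oconv3 b a c z.
Proof. intros (t1 & t2 & t3 & ?). exists t2, t1, t3; lra. Qed.

Lemma oconv3_swap23 a b c z : oconv3 a b c z -> oconv3 a c b z.
Proof. intros (t1 & t2 & t3 & ?). exists t1, t3, t2; lra. Qed.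

Lemma noncollinear_swap12 a b c : ~ collinear a b c -> ~ collinear b a c.
Proof. unfold collinear; lra. Qed.

Lemma noncollinear_swap23 a b c : ~ collinear a b c -> ~ collinear a c b.
Proof. unfold collinear; lra. Qed.

Lemma closed_seg_left x y : closed_seg x y x.
Proof. exists 0; lra. Qed.

Lemma closed_seg_right x y : closed_seg x y y.
Proof. exists 1; lra. Qed.

Lemma closed_seg_sym x y z : closed_seg x y z -> closed_seg y x z.
Proof. intros (t & ?). exists (1 - t); lra. Qed.

Lemma closed_seg_shrink x y d z : closed_seg x y d -> closed_seg d y z -> closed_seg x y z.
Proof.
  intros (r & Hr & Rx & Ry) (s & Hs & Sx & Sy). exists (s + (1 - s) * r).
  split; [split; nra |]. rewrite Sx, Sy, Rx, Ry. split; ring.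
Qed.

Lemma closed_seg_conv3 x y r z : closed_seg x y z -> conv3 x y r z.
Proof. intros (t & ?). exists (1 - t), t, 0; lra. Qed.

Lemma conv3_convex a b c p q z :
  conv3 a b c p -> conv3 a b c q -> closed_seg p q z -> conv3 a b c z.
Proof.
  intros (u1 & u2 & u3 & ?) (v1 & v2 & v3 & ?) (t & ?).
  exists ((1 - t) * u1 + t * v1), ((1 - t) * u2 + t * v2), ((1 - t) * u3 + t * v3).
  repeat split; nra.
Qed.

Lemma closed_seg_triangle_boundary a b c z : ~ collinear a b c -> closed_seg a b z ->
  conv3 a b c z /\ ~ oconv3 a b c z.
Proof.
  intros Hncol Hz. split; [exact (closed_seg_conv3 _ _ _ _ Hz) |].
  destruct Hz as (t & Ht & Ex & Ey). intros (s1 & s2 & s3 & ? & ? & ? & ? & Fx & Fy).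
  destruct (barycentric_unique a b c s1 s2 s3 (1 - t) t 0 Hncol) as (_ & _ & ?); lra.
Qed.

Lemma side_triangle_boundary a b c z : ~ collinear a b c ->
  (closed_seg a b z \/ closed_seg b a z \/ closed_seg a c z \/ closed_seg c a z \/
   closed_seg b c z \/ closed_seg c b z) ->
  conv3 a b c z /\ ~ oconv3 a b c z.
Proof.
  intros Hncol Hz.
  assert (Hab : closed_seg a b z -> conv3 a b c z /\ ~ oconv3 a b c z)
    by exact (closed_seg_triangle_boundary a b c z Hncol).
  assert (Hac : closed_seg a c z -> conv3 a b c z /\ ~ oconv3 a b c z).
  { intros Hs. destruct (closed_seg_triangle_boundary a c b z) as [Hin Hout];
      auto using noncollinear_swap23.
    split; [apply conv3_swap23; exact Hin |].
    intros Hint; apply Hout, oconv3_swap23, Hint. }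
  assert (Hbc : closed_seg b c z -> conv3 a b c z /\ ~ oconv3 a b c z).
  { intros Hs. destruct (closed_seg_triangle_boundary b c a z) as [Hin Hout];
      auto using noncollinear_swap12, noncollinear_swap23.
    split; [apply conv3_swap12, conv3_swap23; exact Hin |].
    intros Hint; apply Hout, oconv3_swap23, oconv3_swap12, Hint. }
  destruct Hz as [Hz | [Hz | [Hz | [Hz | [Hz | Hz]]]]]; auto using closed_seg_sym.
Qed.

Lemma boundary_segment_on_side a b c p q : ~ collinear a b c ->
  (forall z, closed_seg p q z -> conv3 a b c z /\ ~ oconv3 a b c z) ->
  (forall z, closed_seg p q z -> closed_seg b c z) \/
  (forall z, closed_seg p q z -> closed_seg a c z) \/
  (forall z, closed_seg p q z -> closed_seg a b z).
Proof.
  intros Hncol Hpq.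
  destruct (Hpq p (closed_seg_left p q)) as [(u1 & u2 & u3 & ? & ? & ? & ? & Px & Py) _].
  destruct (Hpq q (closed_seg_right p q)) as [(v1 & v2 & v3 & ? & ? & ? & ? & Qx & Qy) _].
  set (m := ((fst p + fst q) / 2, (snd p + snd q) / 2)).
  assert (Hm : closed_seg p q m) by (exists (1 / 2); unfold m; simpl; lra).
  destruct (Hpq m Hm) as [(s1 & s2 & s3 & ? & ? & ? & ? & Mx & My) Hnint].
  unfold m in Mx, My; simpl in Mx, My.
  (* The midpoint is not interior, so one of its barycentric coordinates vanishes;
     these are the averages of those of p and q, so the same coordinate vanishes on p and q. *)
  destruct (barycentric_unique a b c s1 s2 s3
              ((u1 + v1) / 2) ((u2 + v2) / 2) ((u3 + v3) / 2) Hncol) as (E1 & E2 & E3);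
    [lra | lra | rewrite <- Mx, Px, Qx; field | rewrite <- My, Py, Qy; field |].
  assert (Hzero : s1 = 0 \/ s2 = 0 \/ s3 = 0).
  { apply NNPP; intros Hnz. apply Hnint. exists s1, s2, s3. unfold m; simpl.
    repeat split; try lra; apply Rnot_le_lt; intros Hle; apply Hnz; lra. }
  destruct Hzero as [Hz | [Hz | Hz]]; [left | right; left | right; right];
    intros z (t & Ht & Ex & Ey).
  - exists ((1 - t) * u3 + t * v3). split; [split; nra |].
    rewrite Ex, Ey, Px, Py, Qx, Qy.
    replace u1 with 0 by lra; replace v1 with 0 by lra.
    replace u2 with (1 - u3) by lra; replace v2 with (1 - v3) by lra. split; ring.
  - exists ((1 - t) * u3 + t * v3). split; [split; nra |].
    rewrite Ex, Ey, Px, Py, Qx, Qy.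
    replace u2 with 0 by lra; replace v2 with 0 by lra.
    replace u1 with (1 - u3) by lra; replace v1 with (1 - v3) by lra. split; ring.
  - exists ((1 - t) * u2 + t * v2). split; [split; nra |].
    rewrite Ex, Ey, Px, Py, Qx, Qy.
    replace u3 with 0 by lra; replace v3 with 0 by lra.
    replace u1 with (1 - u2) by lra; replace v1 with (1 - v2) by lra. split; ring.
Qed.

Lemma nonextreme_apex_on_base (S : pt -> Prop) b c d :
  (forall z, S z <-> conv3 b c d z) -> ~ extreme S d -> closed_seg b c d.
Proof.
  intros HS Hnext.
  assert (Hd : S d) by (apply HS; exists 0, 0, 1; lra).
  assert (Hxy : exists x y, S x /\ S y /\ strictly_between x y d)
    by (apply NNPP; intros Hno; apply Hnext; split; assumption).
  destruct Hxy as (x & y & Sx & Sy & Hneq & t & Ht & Dx & Dy).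
  apply HS in Sx as (x1 & x2 & x3 & ? & ? & ? & ? & Xx & Xy).
  apply HS in Sy as (y1 & y2 & y3 & ? & ? & ? & ? & Yx & Yy).
  (* d = (1 - g) e + g d with e on [b, c], where g is the weight of the apex d. *)
  assert (Hx3 : x3 <= 1) by lra; assert (Hy3 : y3 <= 1) by lra.
  set (g := (1 - t) * x3 + t * y3).
  destruct (Req_dec g 1) as [Hg | Hg].
  - exfalso. apply Hneq.
    assert (Hx : (1 - t) * (1 - x3) = 0 /\ t * (1 - y3) = 0) by (unfold g in Hg; split; nra).
    destruct Hx as [Hx Hy].
    apply Rmult_integral in Hx as [? | ?]; [lra |].
    apply Rmult_integral in Hy as [? | ?]; [lra |].
    assert (x1 = 0) by lra; assert (x2 = 0) by lra.
    assert (y1 = 0) by lra; assert (y2 = 0) by lra.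
    assert (x3 = 1) by lra; assert (y3 = 1) by lra. subst.
    destruct x, y; simpl in *. f_equal; lra.
  - assert (Hg1 : g < 1) by (unfold g in *; nra).
    set (be := (1 - t) * x2 + t * y2).
    assert (Hbe : 0 <= be) by (unfold be; nra).
    assert (Hal : 0 <= (1 - t) * x1 + t * y1) by nra.
    assert (Hsum : (1 - t) * x1 + t * y1 = 1 - g - be) by (unfold g, be; nra).
    exists (be / (1 - g)). split.
    + unfold Rdiv. split; [apply Rle_mult_inv_pos; lra |].
      apply (Rmult_le_reg_r (1 - g)); [lra |].
      rewrite Rmult_assoc, Rinv_l by lra. lra.
    + assert (Kx : fst d * (1 - g) = (1 - g - be) * fst b + be * fst c).
      { rewrite <- Hsum. replace (fst d * (1 - g)) with (fst d - g * fst d) by ring.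
        rewrite Dx at 1. rewrite Xx, Yx. unfold g, be. ring. }
      assert (Ky : snd d * (1 - g) = (1 - g - be) * snd b + be * snd c).
      { rewrite <- Hsum. replace (snd d * (1 - g)) with (snd d - g * snd d) by ring.
        rewrite Dy at 1. rewrite Xy, Yy. unfold g, be. ring. }
      split; apply (Rmult_eq_reg_r (1 - g)); try lra.
      * rewrite Kx. field. lra.
      * rewrite Ky. field. lra.
Qed.

Section LatticeCorners.

Local Open Scope Z_scope.

Definition black_corner (b f : Face) : Prop :=
  (fst f = fst b + 1 /\ snd f = snd b) \/ (fst f = fst b /\ snd f = snd b + 1) \/
  (fst f = fst b + 1 /\ snd f = snd b + 1).

Definition white_corner (w f : Face) : Prop :=
  (fst f = fst w /\ snd f = snd w) \/ (fst f = fst w + 1 /\ snd f = snd w) \/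
  (fst f = fst w /\ snd f = snd w + 1).

Lemma prod_neq (f g : Z * Z) : f <> g -> fst f <> fst g \/ snd f <> snd g.
Proof.
  destruct f as [f1 f2], g as [g1 g2]; simpl; intros Hneq.
  destruct (Z.eq_dec f1 g1), (Z.eq_dec f2 g2); subst; tauto.
Qed.

Ltac corner_lia :=
  repeat match goal with
  | H : _ <> _ |- _ => apply prod_neq in H
  end;
  unfold black_corner, white_corner in *; cbn [fst snd] in *;
  repeat match goal with
  | H : (_ = _ /\ _) \/ _ |- _ => destruct H as [[? ?] | H]
  | H : _ = _ /\ _ = _ |- _ => destruct H
  end; lia.

Lemma black_corner_cases b f : black_corner b f ->
  f = (fst b + 1, snd b) \/ f = (fst b, snd b + 1) \/ f = (fst b + 1, snd b + 1).
Proof.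
  intros [[? ?] | [[? ?] | [? ?]]]; [left | right; left | right; right];
    apply injective_projections; assumption.
Qed.

Lemma white_corner_cases w f : white_corner w f ->
  f = w \/ f = (fst w + 1, snd w) \/ f = (fst w, snd w + 1).
Proof.
  intros [[? ?] | [[? ?] | [? ?]]]; [left | right; left | right; right];
    apply injective_projections; assumption.
Qed.

Lemma black_of_two_corners b b' f g : black_corner b f -> black_corner b g ->
  black_corner b' f -> black_corner b' g -> f <> g -> b = b'.
Proof. intros; apply injective_projections; corner_lia. Qed.

Lemma black_third_corner b d t : black_corner b d -> black_corner b t -> d <> t ->
  exists q, black_corner b q /\ q <> d /\ q <> t.
Proof.
  intros Hd Ht Hneq.
  apply black_corner_cases in Hd as [-> | [-> | ->]];
  apply black_corner_cases in Ht as [-> | [-> | ->]]; try congruence;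
  [ exists (fst b + 1, snd b + 1) | exists (fst b, snd b + 1) | exists (fst b + 1, snd b + 1)
  | exists (fst b + 1, snd b) | exists (fst b, snd b + 1) | exists (fst b + 1, snd b) ];
  (split; [unfold black_corner; simpl; lia | split; intros E; injection E; lia]).
Qed.

Lemma black_corners_at_most_three b v t x y :
  black_corner b v -> black_corner b t -> black_corner b x -> black_corner b y ->
  v <> t -> v <> x -> v <> y -> t <> x -> t <> y -> x = y.
Proof.
  intros Hv Ht Hx Hy.
  apply black_corner_cases in Hv as [-> | [-> | ->]];
  apply black_corner_cases in Ht as [-> | [-> | ->]];
  apply black_corner_cases in Hx as [-> | [-> | ->]];
  apply black_corner_cases in Hy as [-> | [-> | ->]]; congruence.
Qed.

Lemma black_white_share_two_corners w b f g h :
  white_corner w f -> white_corner w g -> white_corner w h ->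
  black_corner b f -> black_corner b g -> black_corner b h ->
  f <> g -> f <> h -> g <> h -> False.
Proof.
  intros Hf Hg Hh Hbf Hbg Hbh.
  apply white_corner_cases in Hf as [-> | [-> | ->]];
  apply white_corner_cases in Hg as [-> | [-> | ->]];
  apply white_corner_cases in Hh as [-> | [-> | ->]]; try congruence; intros; corner_lia.
Qed.

Lemma white_along_black_side b f g : black_corner b f -> black_corner b g -> f <> g ->
  exists w, adjH w b /\ white_corner w f /\ white_corner w g.
Proof.
  intros Hf Hg Hneq. destruct b as [b1 b2]. unfold adjH.
  apply black_corner_cases in Hf as [-> | [-> | ->]];
  apply black_corner_cases in Hg as [-> | [-> | ->]]; simpl; try congruence;
  [ exists (b1, b2) | exists (b1 + 1, b2) | exists (b1, b2)
  | exists (b1, b2 + 1) | exists (b1 + 1, b2) | exists (b1, b2 + 1) ];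
  (split; [ first [left; reflexivity | right; left; f_equal; simpl; lia
                  | right; right; f_equal; simpl; lia]
          | unfold white_corner; simpl; lia ]).
Qed.

End LatticeCorners.

Lemma four_distinct_in_three {A : Type} (c1 c2 c3 x y z u : A) :
  (x = c1 \/ x = c2 \/ x = c3) -> (y = c1 \/ y = c2 \/ y = c3) ->
  (z = c1 \/ z = c2 \/ z = c3) -> (u = c1 \/ u = c2 \/ u = c3) ->
  x <> y -> x <> z -> y <> z -> u <> x -> u <> y -> u <> z -> False.
Proof.
  intros Hx Hy Hz Hu.
  destruct Hx as [-> | [-> | ->]], Hy as [-> | [-> | ->]], Hz as [-> | [-> | ->]],
    Hu as [-> | [-> | ->]]; congruence.
Qed.

Ltac conv3_permute :=
  solve [ assumption
        | apply conv3_swap12; assumption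
        | apply conv3_swap23; assumption
        | apply conv3_swap12, conv3_swap23; assumption
        | apply conv3_swap23, conv3_swap12; assumption
        | apply conv3_swap12, conv3_swap23, conv3_swap12; assumption ].

Section TGraph.

Variable psi : Face -> pt.

Lemma Seg_corner b f : black_corner b f -> Seg psi b (psi f).
Proof.
  unfold Seg; intros Hf.
  apply black_corner_cases in Hf as [-> | [-> | ->]];
    [exists 1, 0, 0 | exists 0, 1, 0 | exists 0, 0, 1]; lra.
Qed.

Lemma Seg_corners_perm b d t q :
  black_corner b d -> black_corner b t -> black_corner b q -> d <> t -> d <> q -> t <> q ->
  forall z, Seg psi b z <-> conv3 (psi t) (psi q) (psi d) z.
Proof.
  intros Hd Ht Hq Hdt Hdq Htq z. unfold Seg.
  apply black_corner_cases in Hd as [-> | [-> | ->]];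
  apply black_corner_cases in Ht as [-> | [-> | ->]];
  apply black_corner_cases in Hq as [-> | [-> | ->]];
    try congruence; split; intros; conv3_permute.
Qed.

Lemma Seg_side b f g z : black_corner b f -> black_corner b g ->
  closed_seg (psi f) (psi g) z -> Seg psi b z.
Proof. intros Hf Hg. apply conv3_convex; apply Seg_corner; assumption. Qed.

Lemma TriBdry_side w f g z :
  ~ collinear (psi w) (psi ((fst w + 1)%Z, snd w)) (psi (fst w, (snd w + 1)%Z)) ->
  white_corner w f -> white_corner w g -> f <> g -> closed_seg (psi f) (psi g) z ->
  TriBdry psi w z.
Proof.
  intros Hncol Hf Hg Hfg Hz. apply side_triangle_boundary; [assumption |].
  apply white_corner_cases in Hf as [-> | [-> | ->]];
  apply white_corner_cases in Hg as [-> | [-> | ->]]; try congruence; tauto.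
Qed.

Hypothesis Hnd : nondegenerate psi.

Lemma corner_of_Seg b f : Seg psi b (psi f) -> black_corner b f.
Proof.
  (* Otherwise b and the three blacks having f as a corner give four segments through psi f. *)
  intros Hs. apply NNPP; intros Hnc.
  destruct (proj1 Hnd f) as (b1 & b2 & b3 & _ & _ & _ & Hiff & _).
  set (o1 := ((fst f - 1)%Z, snd f)). set (o2 := (fst f, (snd f - 1)%Z)).
  set (o3 := ((fst f - 1)%Z, (snd f - 1)%Z)).
  assert (Ho : forall o, black_corner o f -> o = b1 \/ o = b2 \/ o = b3)
    by (intros o Ho; apply Hiff, Seg_corner, Ho).
  apply (four_distinct_in_three b1 b2 b3 o1 o2 o3 b);
    [ apply Ho; unfold black_corner, o1, o2, o3; simpl; lia .. | apply Hiff, Hs | | | | | | ];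
    try (intros E; injection E; lia); intros ->; apply Hnc; unfold black_corner; simpl; lia.
Qed.

Lemma Seg_interior_unique b b' f :
  rel_interior (Seg psi b) (psi f) -> rel_interior (Seg psi b') (psi f) -> b = b'.
Proof.
  destruct (proj1 Hnd f) as (b1 & b2 & b3 & _ & _ & _ & Hiff & He1 & He2 & _).
  assert (Hint : forall c, rel_interior (Seg psi c) (psi f) -> c = b3).
  { intros c [Hc Hnext]. destruct (proj1 (Hiff c) Hc) as [-> | [-> | ->]]; tauto. }
  intros Hb Hb'. rewrite (Hint b Hb), (Hint b' Hb'). reflexivity.
Qed.

Lemma Tedge_black v v' : Tedge psi v v' ->
  exists b, rel_interior (Seg psi b) (psi v) /\
    black_corner b v /\ black_corner b v' /\ v <> v'.
Proof.
  intros (b & Hint & Hext). exists b.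
  split; [exact Hint | split; [| split]].
  - apply corner_of_Seg, Hint.
  - apply corner_of_Seg, Hext.
  - intros ->. destruct Hint as [_ Hnext]. contradiction.
Qed.

End TGraph.

Section DualOrientation.

Variables (psi : Face -> pt) (F : Face -> Face -> Prop) (o : White -> (Face * Face) * White).

Lemma DualEdge_sym v v' w w' : DualEdge psi F v v' w w' -> DualEdge psi F v v' w' w.
Proof.
  intros (Hte & HnF & Hneq & Hbd).
  split; [exact Hte | split; [exact HnF | split; [congruence |]]].
  intros z Hz. destruct (Hbd z Hz). split; assumption.
Qed.

Lemma DualEdge_glue v v' w x w' y :
  DualEdge psi F v v' w x -> DualEdge psi F v v' w' y -> w <> w' -> DualEdge psi F v v' w w'.
Proof.
  intros (Hte & HnF & _ & Hbd) (_ & _ & _ & Hbd') Hneq.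
  split; [exact Hte | split; [exact HnF | split; [exact Hneq |]]].
  intros z Hz. split; [apply (Hbd z Hz) | apply (Hbd' z Hz)].
Qed.

Hypothesis Hot : oriented_towards_ends psi F o.

Lemma no_oriented_triangle_across v v' w w' y :
  DualEdge psi F v v' w w' -> DualEdge psi F v v' w' y ->
  o w = ((v, v'), w') -> o w' = ((v, v'), y) -> False.
Proof.
  destruct Hot as (_ & Horient & Hray & _).
  intros Hww' Hw'y Hw Hw'.
  assert (Hyw : y <> w)
    by (intros ->; apply (proj2 (Horient _ _ _ _ Hww')); split; assumption).
  assert (Hwy : DualEdge psi F v v' w y)
    by exact (DualEdge_glue _ _ _ _ _ _ Hww' (DualEdge_sym _ _ _ _ Hw'y) (not_eq_sym Hyw)).
  destruct (proj1 (Horient _ _ _ _ Hwy)) as [Hw2 | Hy].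
  - destruct Hw'y as (_ & _ & Hneq & _). congruence.
  - (* w -> w' -> y -> w would be a cycle of the dual orientation *)
    assert (Hcyc : Nat.iter 3 (step o) w = Nat.iter 0 (step o) w).
    { unfold step; simpl. rewrite Hw; simpl. rewrite Hw'; simpl. rewrite Hy. reflexivity. }
    discriminate (Hray _ _ _ Hcyc).
Qed.

Lemma crossing_injective w w' : fst (o w) = fst (o w') -> w = w'.
Proof.
  pose proof (proj1 Hot w) as Hwx; pose proof (proj1 Hot w') as Hw'y.
  destruct (o w) as [[v v'] x] eqn:Hw, (o w') as [[u u'] y] eqn:Hw'; cbn in Hwx, Hw'y |- *.
  intros Heq; injection Heq as <- <-. apply NNPP; intros Hneq.
  pose proof (DualEdge_glue _ _ _ _ _ _ Hwx Hw'y Hneq) as Hww'.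
  destruct (proj1 (proj1 (proj2 Hot) _ _ _ _ Hww')) as [Hw2 | Hw'2].
  - apply (no_oriented_triangle_across v v' w w' y);
      [exact Hww' | exact Hw'y | exact Hw2 | exact Hw'].
  - apply (no_oriented_triangle_across v v' w' w x);
      [exact (DualEdge_sym _ _ _ _ Hww') | exact Hwx | exact Hw'2 | exact Hw].
Qed.

End DualOrientation.

Section Matching.

Variables (psi : Face -> pt) (F : Face -> Face -> Prop) (o : White -> (Face * Face) * White).
Hypotheses (Hnd : nondegenerate psi) (Hforest : spanning_forest psi F)
  (Hot : oriented_towards_ends psi F o).

Lemma matched_white_exists w : exists b, matchedM psi o w b.
Proof.
  destruct (proj1 Hot w) as (_ & _ & _ & Hbd).
  destruct (boundary_segment_on_side _ _ _ _ _ (proj1 (proj2 Hnd) w)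
              (fun z Hz => proj1 (Hbd z Hz))) as [Hside | [Hside | Hside]];
    destruct w as [w1 w2];
    [exists (w1, w2) | exists ((w1 - 1)%Z, w2) | exists (w1, (w2 - 1)%Z)];
    (split; [unfold adjH; auto |]);
    intros z Hz; (eapply Seg_side; [| | apply Hside, Hz]); unfold black_corner; simpl; lia.
Qed.

Lemma matched_white_unique w b b' : matchedM psi o w b -> matchedM psi o w b' -> b = b'.
Proof.
  intros [_ Hb] [_ Hb'].
  destruct (Tedge_black psi Hnd _ _ (proj1 (proj1 Hot w))) as (_ & _ & _ & _ & Hneq).
  refine (black_of_two_corners b b' _ _ _ _ _ _ Hneq); apply (corner_of_Seg psi Hnd);
    [apply Hb | apply Hb | apply Hb' | apply Hb'];
    first [apply closed_seg_left | apply closed_seg_right].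
Qed.

Lemma matched_crossing w b v v' x : o w = ((v, v'), x) -> matchedM psi o w b ->
  rel_interior (Seg psi b) (psi v) /\ black_corner b v /\ black_corner b v' /\
  v <> v' /\ ~ F v v'.
Proof.
  intros Hw [_ Hb]. pose proof (proj1 Hot w) as Hde.
  rewrite Hw in Hde, Hb; cbn in Hde, Hb. destruct Hde as (Hte & HnF & _).
  destruct (Tedge_black psi Hnd _ _ Hte) as (c & Hint & Hcv & Hcv' & Hneq).
  assert (Hbv : black_corner b v)
    by exact (corner_of_Seg psi Hnd _ _ (Hb _ (closed_seg_left _ _))).
  assert (Hbv' : black_corner b v')
    by exact (corner_of_Seg psi Hnd _ _ (Hb _ (closed_seg_right _ _))).
  assert (c = b) as -> by exact (black_of_two_corners c b v v' Hcv Hcv' Hbv Hbv' Hneq).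
  tauto.
Qed.

Lemma matched_black_unique b w w' : matchedM psi o w b -> matchedM psi o w' b -> w = w'.
Proof.
  intros Hm Hm'. apply (crossing_injective psi F o Hot).
  destruct (o w) as [[v v'] x] eqn:Hw, (o w') as [[u u'] y] eqn:Hw'; cbn.
  destruct (matched_crossing w b v v' x Hw Hm) as (Hv & Hbv & Hbv' & Hvv' & HnFv).
  destruct (matched_crossing w' b u u' y Hw' Hm') as (Hu & _ & Hbu' & Huu' & HnFu).
  destruct (proj2 (proj2 Hnd) b) as [D [_ HD]].
  assert (u = v) as -> by (rewrite <- (HD u Hu); exact (HD v Hv)).
  (* Both crossed edges leave the interior point v of psi(b) towards an endpoint which
     is not the F-successor t of v, hence they both end at the third corner. *)
  destruct (proj1 (proj2 Hforest) v) as [t [Hvt _]].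
  destruct (Tedge_black psi Hnd _ _ (proj1 Hforest _ _ Hvt)) as (c & Hc & _ & Hct & Hvt').
  assert (c = b) as -> by exact (Seg_interior_unique psi Hnd c b v Hc Hv).
  assert (v' = u') as ->; [| reflexivity].
  apply (black_corners_at_most_three b v t); try assumption; intros ->; contradiction.
Qed.

Lemma black_crossed_by_dual_edge b : exists D Q w1 w2,
  black_corner b D /\ black_corner b Q /\ adjH w1 b /\ adjH w2 b /\
  DualEdge psi F D Q w1 w2.
Proof.
  destruct (proj2 (proj2 Hnd) b) as [D [HD HDuniq]].
  destruct (proj1 (proj2 Hforest) D) as [t [HDt Htuniq]].
  destruct (Tedge_black psi Hnd _ _ (proj1 Hforest _ _ HDt)) as (c & Hc & HcD & Hct & HDt').
  assert (c = b) as -> by exact (Seg_interior_unique psi Hnd c b D Hc HD).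
  destruct (black_third_corner b D t HcD Hct HDt') as (Q & HbQ & HQD & HQt).
  assert (HQext : extreme (Seg psi b) (psi Q)).
  { apply NNPP; intros Hnext. apply HQD, eq_sym, HDuniq. split; [apply Seg_corner |]; assumption. }
  assert (HnF : ~ F D Q) by (intros HDQ; apply HQt, eq_sym, Htuniq, HDQ).
  destruct (white_along_black_side b D Q HcD HbQ (not_eq_sym HQD)) as (w1 & Hw1b & Hw1D & Hw1Q).
  destruct (white_along_black_side b t Q Hct HbQ (not_eq_sym HQt)) as (w2 & Hw2b & Hw2t & Hw2Q).
  assert (Hw12 : w1 <> w2).
  { intros <-. apply (black_white_share_two_corners w1 b D Q t); assumption || congruence. }
  (* psi(D) is not an endpoint of psi(b), so [psi D, psi Q] lies inside the side [psi t, psi Q]. *)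
  assert (HtQD : closed_seg (psi t) (psi Q) (psi D)).
  { apply (nonextreme_apex_on_base (Seg psi b)); [apply Seg_corners_perm | apply HD];
      congruence || assumption. }
  exists D, Q, w1, w2. do 4 (split; [assumption |]).
  split; [exists b; split; assumption |]. do 2 (split; [assumption |]).
  intros z Hz. pose proof (proj1 (proj2 Hnd)) as Hncol. split.
  - apply (TriBdry_side psi w1 D Q); congruence || auto.
  - apply (TriBdry_side psi w2 t Q); congruence || auto.
    apply (closed_seg_shrink _ _ (psi D)); assumption.
Qed.

Lemma matched_black_exists b : exists w, matchedM psi o w b.
Proof.
  destruct (black_crossed_by_dual_edge b) as (D & Q & w1 & w2 & HbD & HbQ & Hw1 & Hw2 & Hde).
  destruct (proj1 (proj1 (proj2 Hot) _ _ _ _ Hde)) as [Ho | Ho];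
    [exists w1 | exists w2]; (split; [assumption |]);
    rewrite Ho; intros z Hz; exact (Seg_side psi b D Q z HbD HbQ Hz).
Qed.

End Matching.

Theorem mainTheorem7 (psi : Face -> pt) (F : Face -> Face -> Prop)
    (o : White -> (Face * Face) * White) :
  is_Tgraph psi -> nondegenerate psi -> spanning_forest psi F ->
  oriented_towards_ends psi F o ->
  perfect_matching (matchedM psi o).
Proof.
  intros _ Hnd Hforest Hot. split; [| split].
  - intros w b [Hadj _]; exact Hadj.
  - intros w. destruct (matched_white_exists psi F o Hnd Hot w) as [b Hb].
    exists b. split; [exact Hb |].
    intros b'; exact (matched_white_unique psi F o Hnd Hot w b b' Hb).
  - intros b. destruct (matched_black_exists psi F o Hnd Hforest Hot b) as [w Hw].
    exists w. split; [exact Hw |].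
    intros w'; exact (matched_black_unique psi F o Hnd Hforest Hot b w w' Hw).
Qed.
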